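(* Let $d\ge2$, $n\ge1$, $\gamma$ a positive conductivity on the lattice graph below, and $d-1\le t\le dn-1$. Then the only vector in $\mathbb R^{E_t}$ orthogonal (for the standard inner product) to every $\mathbf J_p^{\mathbf u}$ with $\mathbf u\in\mathcal U^{(t)}$ and $p\in L_t\cup L_{t+1}\cup J_t$ is the zero vector; i.e. $\operatorname{span}\{\mathbf J_p^{\mathbf u}:\mathbf u\in\mathcal U^{(t)},\ p\in L_t\cup L_{t+1}\cup J_t\}^\perp=\{0\}$.
   Context: Lattice: $D=\{x\in\mathbb Z^d:1\le x_i\le n\ \forall i\}$, $\partial D=\{p\in\mathbb Z^d:\min_{q\in D}\|q-p\|_{\ell^1}=1\}$; $E$ = unordered pairs $pq\subseteq D\cup\partial D$ with $\|p-q\|_{\ell^1}=1$, not both in $\partial D$; $\mathcal N(p)=\{q:pq\in E\}$. Conductivity $\gamma:E\to(0,\infty)$, symmetric. $S_\gamma\varphi$ is the unique $\mathbf u\in\mathbb R^{D\cup\partial D}$ with $\sum_{q\in\mathcal N(p)}\gamma_{pq}(\mathbf u_q-\mathbf u_p)=0$ for all $p\in D$ and $\mathbf u=\varphi$ on $\partial D$. Functions on subsets are extended by zero. With $s(x)=\sum_ix_i$: $L_t=\{x\in D:s(x)=t\}$, $L_t^{\mathcal S}=\{x\in D:s(x)\le t\}$, $K_t^+=\{x\in\partial D:s(x)=t,\max_ix_i=n+1\}$, $K_t^-=\{x\in\partial D:s(x)=t,\min_ix_i=0\}$, $K_t^{\mathcal S\pm}=\bigcup_{\ell\le t}K_\ell^\pm$,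 $J_t=K_t^-\cup K_{t+1}^+$, $J_t^{\mathcal S}=K_t^{\mathcal S-}\cup K_{t+1}^{\mathcal S+}$. $T_1^{(t)}:\mathbb R^{J_t^{\mathcal S}}\to\mathbb R^{L_{t+1}}$, $\varphi\mapsto(S_\gamma\varphi)|_{L_{t+1}}$, and $\mathcal U^{(t)}=\{(S_\gamma\varphi)|_{J_t^{\mathcal S}\cup L_t^{\mathcal S}}:\varphi\in\ker T_1^{(t)}\}$; elements of $\mathcal U^{(t)}$ are extended by zero to $D\cup\partial D$. $E_t\subseteq E$ is the set of edges joining $K_t^-$ to $L_{t+1}$, $L_t$ to $K_{t+1}^+$, or $L_t$ to $L_{t+1}$. For a node $p$ and $\mathbf u\in\mathcal U^{(t)}$, $\mathbf J_p^{\mathbf u}\in\mathbb R^{E_t}$ is given by $\mathbf J_p^{\mathbf u}(e)=\mathbf u_p-\mathbf u_q$ if $e=pq\in E_t$ is incident to $p$, and $\mathbf J_p^{\mathbf u}(e)=0$ otherwise. *)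

From HB Require Import structures.
From mathcomp Require Import all_boot all_order all_algebra.
From Stdlib Require Import ClassicalEpsilon.
Set Implicit Arguments. Unset Strict Implicit. Unset Printing Implicit Defensive.
Import Order.TTheory GRing.Theory Num.Theory.
Local Open Scope ring_scope.

Section Lattice.
Variables (d n : nat) (R : realFieldType).

(* Nodes: points of [0, n+1]^d, which contains D ∪ ∂D. *)
Definition node := {ffun 'I_d -> 'I_(n.+2)}.

Definition l1dist (x y : node) : nat :=
  (\sum_(i < d) ((x i - y i) + (y i - x i)))%N.

Definition adj (x y : node) : bool := l1dist x y == 1%N.

Definition inD (x : node) : bool := [forall i, (1 <= x i <= n)%N].

Definition inBD (x : node) : bool :=
  ~~ inD x && [exists q, inD q && adj q x].

Definition edge (p q : node) : bool :=
  [&& adj p q, inD p || inBD p, inD q || inBD q & inD p || inD q].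

Definition ssum (x : node) : nat := (\sum_(i < d) (x i : nat))%N.
Definition maxc (x : node) : nat := (\max_(i < d) (x i : nat))%N.
Definition minc (x : node) : nat := (\big[minn/n.+1]_(i < d) (x i : nat))%N.

(* u solves the Dirichlet problem with conductivity gamma and boundary data phi;
   u is a vector on D ∪ ∂D (taken zero on the other points of the box). *)
Definition is_sol (gamma : node -> node -> R) (phi u : node -> R) : Prop :=
  (forall p, inD p -> \sum_(q | edge p q) gamma p q * (u q - u p) = 0) /\
  (forall p, inBD p -> u p = phi p) /\
  (forall p, ~~ inD p -> ~~ inBD p -> u p = 0).

Definition S_gamma (gamma : node -> node -> R) (phi : node -> R) : node -> R :=
  epsilon (inhabits (fun _ => 0)) (is_sol gamma phi).

Definition Lt (t : nat) (x : node) : bool := inD x && (ssum x == t).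
Definition LSt (t : nat) (x : node) : bool := inD x && (ssum x <= t)%N.
Definition Kp (t : nat) (x : node) : bool :=
  [&& inBD x, ssum x == t & maxc x == n.+1].
Definition Km (t : nat) (x : node) : bool :=
  [&& inBD x, ssum x == t & minc x == 0%N].
Definition KSp (t : nat) (x : node) : bool :=
  [&& inBD x, (ssum x <= t)%N & maxc x == n.+1].
Definition KSm (t : nat) (x : node) : bool :=
  [&& inBD x, (ssum x <= t)%N & minc x == 0%N].
Definition Jt (t : nat) (x : node) : bool := Km t x || Kp t.+1 x.
Definition JSt (t : nat) (x : node) : bool := KSm t x || KSp t.+1 x.

(* u ∈ U^(t) (extended by zero to D ∪ ∂D) *)
Definition inU (gamma : node -> node -> R) (t : nat) (u : node -> R) : Prop :=
  exists phi : node -> R,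
    (forall x, ~~ JSt t x -> phi x = 0) /\
    (forall x, Lt t.+1 x -> S_gamma gamma phi x = 0) /\ (* phi ∈ ker T_1^(t) *)
    (forall x, u x = if JSt t x || LSt t x then S_gamma gamma phi x else 0).

(* E_t, each edge written with its endpoint of level t first *)
Definition Et (t : nat) (a b : node) : bool :=
  edge a b &&
  [|| Km t a && Lt t.+1 b, Lt t a && Kp t.+1 b | Lt t a && Lt t.+1 b].

Definition Jvec (u : node -> R) (p a b : node) : R :=
  if a == p then u a - u b else if b == p then u b - u a else 0.

Definition dotEt (t : nat) (w v : node -> node -> R) : R :=
  \sum_(a : node) \sum_(b : node | Et t a b) w a b * v a b.

End Lattice.

(* Call [g] admissible if it is supported on [L_t ∪ J_t] and its extension by zero
   is harmonic at the nodes of [L_(t+1)]. Every admissible [g] is the trace of some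
   [u ∈ U^(t)]: below level [t] the Dirichlet equations form a triangular system, each
   solved for the value at a lower neighbour, and the maximum principle identifies the
   result with [S_gamma phi]. So [w] is orthogonal to [J_p^g] for admissible [g].
   The indicator of a node of [K^+_(t+1)] is admissible, which kills [w] on the edges
   into [K^+_(t+1)]. For [q ∈ L_(t+1)] with lower neighbours [a != a'], the datum
   [gamma q a'] at [a] and [- gamma q a] at [a'] extends, by a second triangular system
   over [L_(t+1) \ {q}], to an admissible function agreeing with it around [q]. Testing
   it at [q], at [a ∈ K^-_t] and at [a ∈ L_t] shows that [w] is proportional to [gamma]
   on the edges into [q], vanishes on the edges out of [K^-_t], and sums to zero on the
   edges out of [L_t]. An induction on one coordinate of [q] then gives [w = 0]. *)

From mathcomp Require Import all_boot all_order all_algebra.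
From mathcomp Require Import zify ring.
From Stdlib Require Import ClassicalEpsilon.
Import Order.TTheory GRing.Theory Num.Theory.
Set Implicit Arguments. Unset Strict Implicit. Unset Printing Implicit Defensive.

Section Lattice.
Variables (d n : nat).
Local Notation node := (node d n).
Implicit Types (x y z p q : node) (i j : 'I_d).

Lemma adj_sym x y : adj x y = adj y x.
Proof. by rewrite /adj /l1dist; congr (_ == _); apply: eq_bigr => i _; rewrite addnC. Qed.

Lemma adjP x y : adj x y ->
  exists i, (x i = (y i).+1 :> nat \/ y i = (x i).+1 :> nat) /\
            forall j, j != i -> x j = y j.
Proof.
rewrite /adj /l1dist => /eqP sum1.
set F := fun i => ((x i - y i) + (y i - x i))%N in sum1.
have [i Fi] : exists i, F i != 0%N.
  apply/existsP; apply: contraT => /existsPn F0.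
  by move: sum1; rewrite big1 // => i _; apply/eqP/negPn/F0.
move: sum1; rewrite (bigD1 i) //=.
set S := (\sum_(j < d | j != i) F j)%N => sum1.
have : S = 0%N by move: sum1 Fi; rewrite /F; lia.
move/eqP; rewrite sum_nat_eq0 => /forall_inP Fj0.
exists i; split; first by move: Fi; rewrite /F; lia.
by move=> j /Fj0 /eqP; rewrite /F => Fj; apply: val_inj => /=; lia.
Qed.

Lemma ssum_update x y i : (forall j, j != i -> x j = y j) ->
  (ssum x + y i = ssum y + x i)%N.
Proof.
move=> xy; rewrite /ssum (bigD1 i) //= [in RHS](bigD1 i) //=.
rewrite (eq_bigr (fun j => (y j : nat))) => [|j /xy -> //]; lia.
Qed.

Lemma adj_ssum x y : adj x y -> ssum x = (ssum y).+1 \/ ssum y = (ssum x).+1.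
Proof. by case/adjP=> i [xy /ssum_update]; lia. Qed.

Lemma adj_ssumS x y : adj x y -> ssum y = (ssum x).+1 ->
  exists i, y i = (x i).+1 :> nat /\ forall j, j != i -> x j = y j.
Proof. by case/adjP=> i [xy /[dup] /ssum_update]; exists i; split=> //; lia. Qed.

Definition lower i x : node :=
  [ffun j => if j == i then inord (x j).-1 else x j].

Lemma lower_at i x : lower i x i = (x i).-1 :> nat.
Proof. by rewrite ffunE eqxx inordK //; have := ltn_ord (x i); lia. Qed.

Lemma lower_off i j x : j != i -> lower i x j = x j.
Proof. by rewrite ffunE => /negbTE ->. Qed.

Lemma ssum_lower i x : (0 < x i)%N -> ssum x = (ssum (lower i x)).+1.
Proof.
move=> xi; have := @ssum_update x (lower i x) i (fun j ji => esym (lower_off x ji)).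
by rewrite lower_at; lia.
Qed.

Lemma adj_lower i x : (0 < x i)%N -> adj x (lower i x).
Proof.
move=> xi; rewrite /adj /l1dist (bigD1 i) //= big1 ?lower_at => [|j ji].
  by apply/eqP; lia.
by rewrite lower_off //; lia.
Qed.

Lemma lower_inj i x y : (0 < x i)%N -> (0 < y i)%N -> lower i x = lower i y -> x = y.
Proof.
move=> xi yi xy; apply/ffunP => j; case: (eqVneq j i) => [-> | ji].
  by apply: val_inj; move: (congr1 (fun z : node => z i : nat) xy); rewrite /= !lower_at; lia.
by move: (congr1 (fun z : node => z j) xy); rewrite /= !lower_off.
Qed.

Lemma adj_lower_level i y z : (0 < y i)%N -> adj (lower i y) z -> ssum z = ssum y ->
  z = y \/ (z i = (y i).-1 :> nat /\ forall j, j != i -> (y j <= z j)%N).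
Proof.
move=> yi yz zy; have [k [zk zoff]] := adj_ssumS yz (etrans zy (ssum_lower yi)).
case: (eqVneq k i) => [ki | ki].
  subst k; left; apply/ffunP => j; case: (eqVneq j i) => [-> | ji].
    by apply: val_inj => /=; rewrite zk lower_at; lia.
  by rewrite -zoff // lower_off.
right; split; first by rewrite -(zoff i) ?lower_at // eq_sym.
move=> j ji; case: (eqVneq j k) => [-> | jk]; first by rewrite zk lower_off // eq_sym.
by rewrite -zoff // lower_off.
Qed.

Lemma inD_coord x i : inD x -> (1 <= x i <= n)%N.
Proof. by move=> /forallP. Qed.

Lemma adj_inD p x : inD p -> adj p x -> inD x || inBD x.
Proof.
move=> Dp px; case: (boolP (inD x)) => //= Dx.
by rewrite /inBD Dx; apply/existsP; exists p; rewrite Dp.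
Qed.

Lemma edge_sym p q : edge p q = edge q p.
Proof.
rewrite /edge adj_sym; case: (adj q p) => //=.
by case: (inD p); case: (inD q); case: (inBD p); case: (inBD q).
Qed.

Lemma edge_adj p q : edge p q -> adj p q.
Proof. by case/and4P. Qed.

Lemma edge_lower i p : inD p -> edge p (lower i p).
Proof.
move=> Dp; have pi : (0 < p i)%N by have := inD_coord i Dp; lia.
by rewrite /edge adj_lower // Dp /= (adj_inD Dp (adj_lower pi)).
Qed.

Lemma inBD_coord x : inBD x -> exists i, x i = 0%N :> nat \/ x i = n.+1 :> nat.
Proof.
by case/andP=> /forallPn [i xi] _; exists i; have := leq_ord (x i); move: xi; lia.
Qed.

Lemma inBD_notD x : inBD x -> inD x = false.
Proof. by case/andP=> /negbTE. Qed.

Lemma inBD_nbr_unique x a b : inBD x -> inD a -> inD b -> adj a x -> adj b x -> a = b.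
Proof.
move=> Bx Da Db ax bx; have [k xk] := inBD_coord Bx.
have [i [axi aoff]] := adjP ax; have [i' [bxi' boff]] := adjP bx.
have ak := inD_coord k Da; have bk := inD_coord k Db.
have ki : k = i by apply/eqP/negPn/negP => /aoff e; move: ak; rewrite e; lia.
have ki' : k = i' by apply/eqP/negPn/negP => /boff e; move: bk; rewrite e; lia.
subst i i'; apply/ffunP => j; case: (eqVneq j k) => [-> | jk].
  by apply: val_inj => /=; lia.
by rewrite aoff // boff.
Qed.

Lemma minc_eq0 x i : x i = 0%N :> nat -> minc x = 0%N.
Proof.
rewrite /minc => xi; have : i \in index_enum 'I_d by rewrite mem_index_enum.
elim: (index_enum _) => [//| j r IHr]; rewrite inE big_cons => /orP [/eqP <- | /IHr ->].
  by rewrite xi min0n.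
by rewrite minn0.
Qed.

Lemma maxc_eqS x i : x i = n.+1 :> nat -> maxc x = n.+1.
Proof.
move=> xi; rewrite /maxc (bigD1 i) //= xi; apply/maxn_idPl.
by apply/bigmax_leqP => j _; apply: leq_ord.
Qed.

Lemma maxcP x : maxc x = n.+1 -> exists i, x i = n.+1 :> nat.
Proof.
move=> mx; have /existsP [i /eqP] : [exists i, x i == n.+1 :> nat]; last by exists i.
apply: contraT => /existsPn xn; suff : (maxc x <= n)%N by rewrite mx ltnn.
by apply/bigmax_leqP => j _; have := xn j; have := leq_ord (x j); lia.
Qed.

Lemma inBD_JSt t x : inBD x -> (ssum x <= t)%N -> JSt t x.
Proof.
move=> Bx xt; have [i [/minc_eq0 xi | /maxc_eqS xi]] := inBD_coord Bx.
  by rewrite /JSt /KSm Bx xt xi.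
by rewrite /JSt /KSp Bx xi eqxx andbT orbC (leqW xt).
Qed.

Lemma inBD_below_minc q x : inD q -> adj q x -> ssum q = (ssum x).+1 -> inBD x ->
  minc x = 0%N.
Proof.
rewrite adj_sym => Dq xq qx Bx; have [i [qi qoff]] := adj_ssumS xq qx.
have [k xk] := inBD_coord Bx; have qk := inD_coord k Dq.
case: (eqVneq k i) => [ki | ki]; last by move: qk; rewrite -(qoff _ ki); lia.
by subst k; apply: (minc_eq0 (i := i)); lia.
Qed.

Lemma maxc_above p q : inD p -> adj p q -> maxc q = n.+1 -> ssum q = (ssum p).+1.
Proof.
move=> Dp pq /maxcP [i qi]; have [k [pqk poff]] := adjP pq; have pi := inD_coord i Dp.
case: (eqVneq i k) => [ik | ik]; last by move: pi; rewrite poff // qi; lia.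
by subst k; have := ssum_update poff; lia.
Qed.

(* [ssum p * n.+2 + p i] orders nodes lexicographically by level, then by [p i]. *)
Lemma lower_rank i p p' : (0 < p i)%N ->
  p' = lower i p \/ adj p' (lower i p) -> p' != p ->
  (ssum p' * n.+2 + p' i < ssum p * n.+2 + p i)%N.
Proof.
move=> pi lp p'p; have pl := ssum_lower pi; have p'i := leq_ord (p' i).
case: lp => [e | ]; first by subst p'; rewrite pl; nia.
rewrite adj_sym => lp'; case: (adj_ssum lp') => [e | e]; first by rewrite pl; nia.
have [e' | [p'i_eq _]] := adj_lower_level pi lp' (etrans e (esym pl)).
  by rewrite e' eqxx in p'p.
by rewrite e -pl; lia.
Qed.

Lemma Lt_ssum s x : Lt s x -> ssum x = s. Proof. by case/andP=> _ /eqP. Qed.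
Lemma Lt_inD s x : Lt s x -> inD x. Proof. by case/andP. Qed.
Lemma Km_ssum s x : Km s x -> ssum x = s. Proof. by case/and3P=> _ /eqP. Qed.
Lemma Kp_ssum s x : Kp s x -> ssum x = s. Proof. by case/and3P=> _ /eqP. Qed.
Lemma Km_inBD s x : Km s x -> inBD x. Proof. by case/and3P. Qed.
Lemma Kp_inBD s x : Kp s x -> inBD x. Proof. by case/and3P. Qed.

Lemma Jt_JSt t x : Jt t x -> JSt t x.
Proof.
by rewrite /JSt /KSm /KSp => /orP [] /and3P [-> /eqP -> ->]; rewrite leqnn ?orbT.
Qed.

Lemma JSt_inBD t x : JSt t x -> inBD x.
Proof. by case/orP=> /and3P []. Qed.

Lemma Jt_ssum t x : Jt t x -> ssum x = t \/ ssum x = t.+1.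
Proof. by case/orP=> [/Km_ssum | /Kp_ssum]; [left | right]. Qed.

End Lattice.

Local Open Scope ring_scope.

Section TriangularSystem.
Variables (R : fieldType) (X Y : finType) (P : pred Y) (A : Y -> X -> R) (b : Y -> R).
Variables (pivot : Y -> X) (rank : Y -> nat) (base : X -> R).
Hypotheses (pivot_inj : {in P &, injective pivot})
  (pivot_neq0 : forall y, P y -> A y (pivot y) != 0)
  (pivot_rank : forall y y', P y -> P y' -> y != y' -> A y' (pivot y) != 0 ->
     (rank y' < rank y)%N).

Let top := (\max_y rank y)%N.

(* Equations are solved by decreasing rank, each one for its own pivot,
   which does not occur in the equations solved before. *)
Lemma triangular_solve_from k : exists g : X -> R,
  (forall y, P y -> (top < rank y + k)%N -> \sum_x A y x * g x = b y) /\
  (forall x, (forall y, P y -> pivot y != x) -> g x = base x).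
Proof.
elim: k => [|k [g [g_solves g_base]]].
  by exists base; split=> // y _; have := leq_bigmax y (F := rank); lia.
pose g' x := if [pick y | [&& P y, rank y + k == top & pivot y == x]%N] is Some y
  then (b y - \sum_(x' | x' != x) A y x' * g x') / A y x else g x.
have g'_old y x : P y -> (top <= rank y + k)%N -> x != pivot y ->
    A y x * g' x = A y x * g x.
  move=> Py yk xy; rewrite /g'; case: pickP => // y' /and3P [Py' /eqP y'k /eqP y'x].
  subst x.
  have [-> | Ay0] := eqVneq (A y (pivot y')) 0; first by rewrite !mul0r.
  have y'y : y' != y by apply: contra_neq xy => ->.
  by have := pivot_rank Py' Py y'y Ay0; lia.
exists g'; split=> [y Py | x x_new]; last first.
  rewrite /g'; case: pickP => [y /and3P [Py _ /eqP yx] | _]; last exact: g_base.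
  by have := x_new y Py; rewrite yx eqxx.
rewrite addnS ltnS leq_eqVlt => /orP [/eqP y_new | y_old]; last first.
  rewrite -(g_solves y Py y_old); apply: eq_bigr => x _.
  have [-> | ?] := eqVneq x (pivot y); last by apply: g'_old => //; lia.
  rewrite /g'; case: pickP => // y' /and3P [Py' /eqP y'k /eqP /pivot_inj y'y].
  by move: y_old; rewrite -y'y // y'k ltnn.
rewrite (bigD1 (pivot y)) //= (eq_bigr (fun x => A y x * g x)) => [|x ?]; last first.
  by apply: g'_old => //; lia.
rewrite {1}/g'; case: pickP => [y' /and3P [Py' _ /eqP /pivot_inj y'y] | /(_ y)].
  by rewrite -y'y // mulrC divfK ?pivot_neq0 ?subrK.
by rewrite Py y_new !eqxx.
Qed.

Lemma triangular_solve : exists g : X -> R,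
  (forall y, P y -> \sum_x A y x * g x = b y) /\
  (forall x, (forall y, P y -> pivot y != x) -> g x = base x).
Proof.
have [g [g_solves g_base]] := triangular_solve_from top.+1.
by exists g; split=> // y Py; apply: g_solves; lia.
Qed.

End TriangularSystem.

Section Dirichlet.
Variables (R : realFieldType) (d n : nat).
Local Notation node := (node d n).
Variable gamma : node -> node -> R.
Implicit Types (u v z phi : node -> R) (p q x : node).

Definition lap u p : R := \sum_(q | edge p q) gamma p q * (u q - u p).

Lemma lapB u v p : lap (fun x => u x - v x) p = lap u p - lap v p.
Proof. by rewrite /lap -sumrB; apply: eq_bigr => q _; ring. Qed.

Definition lap_coef p x : R :=
  (if edge p x then gamma p x else 0) - (if x == p then \sum_(q | edge p q) gamma p q else 0).

Lemma lap_coefE u p : lap u p = \sum_x lap_coef p x * u x.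
Proof.
rewrite /lap /lap_coef [RHS](eq_bigr (fun x => (if edge p x then gamma p x * u x else 0)
   - (if x == p then (\sum_(q | edge p q) gamma p q) * u x else 0))) => [|x _]; last first.
  by rewrite mulrBl; case: ifP; case: ifP; rewrite ?mul0r.
rewrite sumrB -!big_mkcond big_pred1_eq.
by rewrite mulr_suml -sumrB; apply: eq_bigr => q _; rewrite mulrBr.
Qed.

Hypotheses (d_gt0 : (0 < d)%N) (gamma_pos : forall p q, edge p q -> 0 < gamma p q).
Let i0 : 'I_d := Ordinal d_gt0.

(* A positive maximum would be attained at a node of [D] of least level, whose
   lower neighbour would carry the same value. *)
Lemma harmonic_le0 z : (forall p, inD p -> lap z p = 0) -> (forall p, ~~ inD p -> z p = 0) ->
  forall p, z p <= 0.
Proof.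
move=> z_harm z_out x0; rewrite leNgt; apply/negP => z0.
have [xm _ xm_max] := @arg_maxP _ R _ x0 predT z isT.
have [y /eqP zy y_min] := @arg_minnP _ xm (fun x => z x == z xm) (@ssum d n) (eqxx _).
have Dy : inD y by apply: contraTT z0 => /z_out y0; rewrite -leNgt -y0 zy; apply: xm_max.
have nonneg q : edge y q -> 0 <= - (gamma y q * (z q - z y)).
  by move=> yq; rewrite -mulrN opprB pmulr_rge0 ?gamma_pos // subr_ge0 zy; apply: xm_max.
have /(psumr_eq0P nonneg) flat : \sum_(q | edge y q) - (gamma y q * (z q - z y)) = 0.
  by rewrite sumrN -/(lap z y) z_harm ?oppr0.
have yl := edge_lower i0 Dy.
move/eqP: (flat _ yl); rewrite oppr_eq0 mulf_eq0 (gt_eqF (gamma_pos yl)) subr_eq0 => /eqP zl.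
have := y_min (lower i0 y); rewrite zl zy eqxx => /(_ isT).
by rewrite (ssum_lower (i := i0)) ?ltnn //; have := inD_coord i0 Dy; lia.
Qed.

Lemma sol_unique phi u v : is_sol gamma phi u -> is_sol gamma phi v -> u =1 v.
Proof.
suff le u' v' : is_sol gamma phi u' -> is_sol gamma phi v' -> forall x, u' x - v' x <= 0.
  by move=> su sv x; apply/eqP; rewrite eq_le -subr_le0 le //= -subr_le0 le.
move=> [u_harm [u_bd u_out]] [v_harm [v_bd v_out]].
apply: (harmonic_le0 (z := fun x => u' x - v' x)) => [p Dp | p Dp].
  by rewrite lapB /lap u_harm // v_harm // subrr.
have [Bp | Bp] := boolP (inBD p); first by rewrite /= u_bd // v_bd // subrr.
by rewrite /= u_out // v_out // subrr.
Qed.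

Lemma S_gammaE phi u : is_sol gamma phi u -> S_gamma gamma phi =1 u.
Proof. by move=> su; apply: (sol_unique _ su); apply: epsilon_spec; exists u. Qed.

End Dirichlet.

Section AdmissibleData.
Variables (R : realFieldType) (d n : nat).
Local Notation node := (node d n).
Variables (gamma : node -> node -> R) (t : nat).
Implicit Types (g u : node -> R) (p q x y : node).

(* The second condition is harmonicity at [y] of the extension of [g] by zero,
   which vanishes at [y]. *)
Definition admissible g :=
  (forall x, ~~ (Lt t x || Jt t x) -> g x = 0) /\
  (forall y, Lt t.+1 y -> \sum_(x | edge y x) gamma y x * g x = 0).

Lemma admissible_inD g x : admissible g -> inD x -> ssum x != t -> g x = 0.
Proof.
move=> [g_supp _] Dx xt; apply: g_supp; rewrite /Lt /Jt /Km /Kp.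
by rewrite Dx (negbTE xt) /inBD Dx.
Qed.

Lemma admissible_Lt1 g x : admissible g -> Lt t.+1 x -> g x = 0.
Proof. by move=> adm x1; rewrite (admissible_inD adm (Lt_inD x1)) ?(Lt_ssum x1) // gtn_eqF. Qed.

Lemma admissible_lap_above g p : admissible g -> inD p -> (t < ssum p)%N ->
  lap gamma g p = 0.
Proof.
move=> [g_supp g_harm] Dp tp; rewrite /lap (admissible_inD (conj g_supp g_harm)) ?gtn_eqF //.
under eq_bigr do rewrite subr0.
have [pt | pt] := eqVneq (ssum p) t.+1; first by apply: g_harm; rewrite /Lt Dp pt eqxx.
apply: big1 => q pq; rewrite g_supp ?mulr0 //; have := adj_ssum (edge_adj pq).
move=> pq_lev; apply/negP => /or3P [/Lt_ssum | /Km_ssum | ]; try lia.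
by case/and3P=> _ /eqP qt /eqP /(maxc_above Dp (edge_adj pq)); lia.
Qed.

Lemma admissible_sol g u : admissible g ->
  (forall p, inD p -> (ssum p <= t)%N -> lap gamma u p = 0) ->
  (forall x, (t <= ssum x)%N || ~~ (inD x || inBD x) -> u x = g x) ->
  is_sol gamma (fun x => if JSt t x then u x else 0) u.
Proof.
move=> adm u_harm u_g; have [g_supp _] := adm.
have g_out x : ~~ (inD x || inBD x) -> g x = 0.
  move=> xout; apply: g_supp; apply: contra xout => /orP [/Lt_inD -> // | /Jt_JSt /JSt_inBD ->].
  by rewrite orbT.
split; [|split].
- move=> p Dp; have [pt | tp] := leqP (ssum p) t; first exact: u_harm.
  rewrite -[RHS](admissible_lap_above adm Dp tp); apply: eq_bigr => q pq.
  by rewrite !u_g ?(ltnW tp) //; have := adj_ssum (edge_adj pq); lia.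
- move=> p Bp; case: ifP => // pJ.
  have tp : (t < ssum p)%N by rewrite ltnNge; apply: contraFN pJ; apply: inBD_JSt.
  rewrite u_g ?(ltnW tp) // g_supp // /Lt (inBD_notD Bp) /=.
  by apply: contraFN pJ; apply: Jt_JSt.
- by move=> p Dp Bp; rewrite u_g ?g_out ?negb_or ?Dp ?Bp ?orbT.
Qed.

End AdmissibleData.

Section AdmissibleExtension.
Variables (R : realFieldType) (d n : nat).
Local Notation node := (node d n).
Variables (gamma : node -> node -> R) (t : nat).
Hypotheses (d_gt0 : (0 < d)%N) (gamma_pos : forall p q, edge p q -> 0 < gamma p q).
Let i0 : 'I_d := Ordinal d_gt0.

(* The harmonic equation at a node [p] of level at most [t] is solved for the
   value at its lower neighbour [lower i0 p]. *)
Lemma harmonic_extension_below (g : node -> R) : exists u,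
  (forall p, inD p -> (ssum p <= t)%N -> lap gamma u p = 0) /\
  (forall x, (t <= ssum x)%N || ~~ (inD x || inBD x) -> u x = g x).
Proof.
pose P := [pred p : node | inD p && (ssum p <= t)%N].
have P_pos p : P p -> (0 < p i0)%N by case/andP=> /(inD_coord i0); lia.
have [|||u [u_harm u_g]] := @triangular_solve R node node P (lap_coef gamma) (fun=> 0)
    (lower i0) (fun p => ssum p * n.+2 + p i0)%N g.
- by move=> p p' /P_pos pp /P_pos pp'; apply: lower_inj.
- move=> p Pp; have Dp : inD p by case/andP: Pp.
  have lp : lower i0 p != p by apply/eqP=> e; have := ssum_lower (P_pos p Pp); rewrite e; lia.
  by rewrite /lap_coef edge_lower // (negbTE lp) subr0 gt_eqF ?gamma_pos ?edge_lower.
- move=> p p' Pp Pp' pp'; rewrite /lap_coef => c0; apply: lower_rank (P_pos p Pp) _ _.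
    move: c0; case: (eqVneq (lower i0 p) p') => [-> | _]; first by left.
    by rewrite subr0; case: ifP => [/edge_adj | ]; [right | rewrite eqxx].
  by rewrite eq_sym.
exists u; split=> [p Dp pt | x xlev]; first by rewrite lap_coefE u_harm //= Dp.
apply: u_g => p /andP [Dp pt]; apply/eqP => px; move: xlev; rewrite -px.
have pi0 : (0 < p i0)%N by apply: P_pos; rewrite /= Dp.
by rewrite (adj_inD Dp (adj_lower pi0)) orbF; have := ssum_lower pi0; lia.
Qed.

Lemma admissible_inU (g : node -> R) : admissible gamma t g -> exists u, inU gamma t u /\
  forall x, [|| Lt t x, Jt t x | Lt t.+1 x] -> u x = g x.
Proof.
move=> adm; have [u [u_harm u_g]] := harmonic_extension_below g.
set phi := fun x => if JSt t x then u x else 0.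
have S_u := S_gammaE d_gt0 gamma_pos (admissible_sol adm u_harm u_g).
have g_Lt1 := admissible_Lt1 adm.
exists (fun x => if JSt t x || LSt t x then S_gamma gamma phi x else 0); split.
  exists phi; split; [by move=> x /negbTE; rewrite /phi => -> | split=> // x x1].
  by rewrite S_u u_g ?g_Lt1 // (Lt_ssum x1) leqnSn.
move=> x; have [x1 _ | nx1] := boolP (Lt t.+1 x).
  rewrite g_Lt1 // ifF //; apply/negP => /orP [/JSt_inBD | /andP [_]].
    by rewrite /inBD (Lt_inD x1).
  by rewrite (Lt_ssum x1) ltnn.
rewrite orbF => /orP [xt | /[dup] /Jt_JSt xJ /Jt_ssum xt].
  by rewrite ifT ?S_u ?u_g ?(Lt_ssum xt) ?leqnn // orbC /LSt (Lt_inD xt) (Lt_ssum xt) leqnn.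
by rewrite xJ S_u u_g //; case: xt => ->; rewrite ?leqnn ?leqnSn.
Qed.

End AdmissibleExtension.

Section LayerEdges.
Variables (d n t : nat).
Local Notation node := (node d n).
Implicit Types (a b q x : node).

Lemma Et_edge a b : Et t a b -> edge a b.
Proof. by case/andP. Qed.

Lemma Et_src a b : Et t a b -> Lt t a || Km t a.
Proof. by case/andP=> _ /or3P [] /andP [-> _]; rewrite ?orbT. Qed.

Lemma Et_supp a b : Et t a b -> Lt t a || Jt t a.
Proof. by move/Et_src; rewrite /Jt => /orP [] ->; rewrite ?orbT. Qed.

Lemma Et_dst a b : Et t a b -> Lt t.+1 b || Kp t.+1 b.
Proof. by case/andP=> _ /or3P [] /andP [_ ->]; rewrite ?orbT. Qed.

Lemma Et_ssum a b : Et t a b -> ssum a = t /\ ssum b = t.+1.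
Proof.
move=> ab; have := Et_dst ab; case/orP: (Et_src ab) => [/Lt_ssum | /Km_ssum] ->.
all: by case/orP=> [/Lt_ssum | /Kp_ssum] ->.
Qed.

Lemma Et_neq a b : Et t a b -> a != b.
Proof. by case/Et_ssum=> a_t b_t; apply/eqP=> ab; move: a_t; rewrite ab b_t; lia. Qed.

Lemma Et_Kp a b : Et t a b -> Kp t.+1 b -> Lt t a.
Proof.
case/andP=> _ /or3P [] /andP [a_lev b_lev] /Kp_inBD; rewrite ?a_lev //.
by rewrite /inBD (Lt_inD b_lev).
Qed.

Lemma Et_Km a b : Et t a b -> Km t a -> Lt t.+1 b.
Proof.
case/andP=> _ /or3P [] /andP [a_lev b_lev] /Km_inBD; rewrite ?b_lev //.
all: by rewrite /inBD (Lt_inD a_lev).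
Qed.

Lemma star_Et x q : Lt t.+1 q -> edge q x -> ssum x = t -> Et t x q.
Proof.
move=> q1 qx xt; have Dq := Lt_inD q1; rewrite /Et edge_sym qx q1 !andbT.
have [Dx | Dx] := boolP (inD x); first by apply/or3P/Or33; rewrite /Lt Dx xt eqxx.
have Bx : inBD x by move: (adj_inD Dq (edge_adj qx)); rewrite (negbTE Dx).
have := inBD_below_minc Dq (edge_adj qx) _ Bx; rewrite (Lt_ssum q1) xt => /(_ erefl) x0.
by apply/or3P/Or31; rewrite /Km Bx xt x0 eqxx.
Qed.

Lemma Et_lower i q : Lt t.+1 q -> Et t (lower i q) q.
Proof.
move=> q1; have Dq := Lt_inD q1; have /andP [qi _] := inD_coord i Dq.
by apply: star_Et => //; [apply: edge_lower | have := ssum_lower qi; rewrite (Lt_ssum q1); lia].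
Qed.

End LayerEdges.

Section StarPivot.
Variables (d n : nat) (i0 i1 : 'I_d) (q : node d n).
Hypothesis i01 : i0 != i1.
Implicit Types (y z : node d n).

Definition star_pivot y := lower (if (y i0 <= q i0)%N then i0 else i1) y.
Definition star_rank y : nat := if (y i0 <= q i0)%N then y i0 else y i1.

(* Lowering along [i0] on one side of [q] and along [i1] on the other keeps the
   other neighbours of a pivot away from [q]. *)
Lemma star_pivot_adj y z : inD y -> adj (star_pivot y) z -> ssum z = ssum y -> z != y ->
  z != q /\ (star_rank z < star_rank y)%N.
Proof.
rewrite /star_pivot /star_rank => Dy; case: ifP => yq yz zy z_ne_y.
  have /andP [yi _] := inD_coord i0 Dy.
  have [e | [zi _]] := adj_lower_level yi yz zy; first by rewrite e eqxx in z_ne_y.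
  by split; [apply/eqP=> e; move: zi; rewrite e | rewrite ifT]; lia.
have /andP [yi _] := inD_coord i1 Dy.
have [e | [zi /(_ i0 i01) z_ge]] := adj_lower_level yi yz zy; first by rewrite e eqxx in z_ne_y.
by split; [apply/eqP=> e; move: z_ge; rewrite e | rewrite ifF]; lia.
Qed.

Lemma star_pivot_inj : {in @inD d n &, injective star_pivot}.
Proof.
move=> y y' Dy Dy'; have := inD_coord i0 Dy; have := inD_coord i0 Dy'.
have := inD_coord i1 Dy; have := inD_coord i1 Dy'; rewrite /star_pivot.
case: ifP => yq; case: ifP => y'q ? ? ? ? e; try by apply: lower_inj e; lia.
all: move/(congr1 (fun z : node d n => z i0 : nat)): e; rewrite /= ?lower_at ?lower_off //.
all: by lia.
Qed.

End StarPivot.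

Section StarData.
Variables (R : realFieldType) (d n : nat).
Local Notation node := (node d n).
Variables (gamma : node -> node -> R) (t : nat) (i0 i1 : 'I_d).
Hypotheses (gamma_pos : forall p q, edge p q -> 0 < gamma p q) (i01 : i0 != i1).
Implicit Types (a q x y : node).

Definition star_datum q a a' x : R :=
  if x == a then gamma q a' else if x == a' then - gamma q a else 0.

Lemma sum_star_datum (P : pred node) (c : node -> R) q a a' : P a -> P a' -> a != a' ->
  \sum_(x | P x) c x * star_datum q a a' x = c a * gamma q a' - c a' * gamma q a.
Proof.
move=> Pa Pa' aa'; rewrite (bigD1 a) // (bigD1 a') /= ?Pa' 1?eq_sym //.
rewrite big1 => [|x /andP [/andP [_ /negbTE xa] /negbTE xa']]; last first.
  by rewrite /star_datum xa xa' mulr0.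
by rewrite /star_datum eqxx eq_sym (negbTE aa') eqxx addr0 mulrN.
Qed.

(* The equations at the nodes [y != q] of [L_(t+1)] are solved for the values at
   their star pivots, which are not adjacent to [q]. *)
Lemma admissible_star q a a' : Lt t.+1 q -> Et t a q -> Et t a' q -> a != a' ->
  exists g, admissible gamma t g /\ forall x, edge q x -> g x = star_datum q a a' x.
Proof.
move=> q1 aq a'q aa'; pose P := [pred y | Lt t.+1 y && (y != q)].
have [|||g [g_harm g_base]] := @triangular_solve R node node P
    (fun y x => if edge y x then gamma y x else 0) (fun=> 0)
    (star_pivot i0 i1 q) (star_rank i0 i1 q) (star_datum q a a').
- by move=> y y' /andP [/Lt_inD Dy _] /andP [/Lt_inD Dy' _]; apply: star_pivot_inj.
- move=> y /andP [/Lt_inD Dy _].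
  by rewrite /star_pivot edge_lower // gt_eqF ?gamma_pos ?edge_lower.
- move=> y y' /andP [y1 _] /andP [y'1 _] yy'.
  case: ifP => [/edge_adj | _]; last by rewrite eqxx.
  rewrite adj_sym => adj_y' _; apply: (proj2 (star_pivot_adj i01 (Lt_inD y1) adj_y' _ _)).
    by rewrite (Lt_ssum y1) (Lt_ssum y'1).
  by rewrite eq_sym.
have g_star x : edge q x -> g x = star_datum q a a' x.
  move=> qx; apply: g_base => y /andP [y1 yq]; apply/eqP => yx.
  have adj_q : adj (star_pivot i0 i1 q y) q by rewrite yx adj_sym edge_adj.
  have := star_pivot_adj i01 (Lt_inD y1) adj_q; rewrite (Lt_ssum y1) (Lt_ssum q1) eq_sym.
  by move=> /(_ erefl yq) []; rewrite eqxx.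
exists g; split=> //; split=> [x | y y1].
  apply: contraNeq => gx.
  have [y /andP [/andP [y1 _] /eqP <-] | no_pivot] :=
    pickP [pred y | P y && (star_pivot i0 i1 q y == x)]; first exact: Et_supp (Et_lower _ y1).
  move: gx; rewrite g_base => [|y /andP [y1 yq]]; last first.
    by have := no_pivot y; rewrite /= y1 yq => /negbT.
  rewrite /star_datum; case: ifP => [/eqP -> _ | _]; first exact: Et_supp aq.
  by case: ifP => [/eqP -> _ | _]; [exact: Et_supp a'q | rewrite eqxx].
have [-> | yq] := eqVneq y q.
  under eq_bigr => x qx do rewrite g_star //.
  rewrite sum_star_datum //; first by rewrite mulrC subrr.
  by rewrite edge_sym (Et_edge aq).
  by rewrite edge_sym (Et_edge a'q).
rewrite -[RHS](g_harm y) /= ?y1 // [LHS]big_mkcond; apply: eq_bigr => x _.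
by case: ifP; rewrite ?mul0r.
Qed.

End StarData.

Section Orthogonality.
Variables (R : realFieldType) (d n : nat).
Local Notation node := (node d n).
Variables (gamma : node -> node -> R) (t : nat) (w : node -> node -> R).
Implicit Types (F : node -> node -> R) (u g : node -> R) (a b p q x : node).

Lemma dotEt_col F q : (forall a b, Et t a b -> b != q -> F a b = 0) ->
  dotEt t w F = \sum_(a | Et t a q) w a q * F a q.
Proof.
move=> F0; rewrite /dotEt [RHS]big_mkcond; apply: eq_bigr => a _.
case: ifP => aq.
  by rewrite (bigD1 q) //= big1 ?addr0 // => b /andP [ab bq]; rewrite F0 ?mulr0.
by apply: big1 => b ab; rewrite F0 ?mulr0 //; apply: contraFneq aq => <-.
Qed.

Lemma dotEt_row F p : (forall a b, Et t a b -> a != p -> F a b = 0) ->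
  dotEt t w F = \sum_(b | Et t p b) w p b * F p b.
Proof.
move=> F0; rewrite /dotEt (bigD1 p) //= [X in _ + X]big1 ?addr0 // => a ap.
by apply: big1 => b ab; rewrite F0 ?mulr0.
Qed.

Lemma Jvec_col u p a b : ssum p = t.+1 -> Et t a b -> b != p -> Jvec u p a b = 0.
Proof.
move=> pt ab bp; rewrite /Jvec (negbTE bp) ifF //; apply/negbTE/eqP => ap.
by have [+ _] := Et_ssum ab; rewrite ap pt; lia.
Qed.

Lemma Jvec_row u p a b : ssum p = t -> Et t a b -> a != p -> Jvec u p a b = 0.
Proof.
move=> pt ab ap; rewrite /Jvec (negbTE ap) ifF //; apply/negbTE/eqP => bp.
by have [_] := Et_ssum ab; rewrite bp pt; lia.
Qed.

Hypotheses (d_gt1 : (1 < d)%N) (gamma_pos : forall p q, edge p q -> 0 < gamma p q).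
Hypothesis w_perp : forall u, inU gamma t u ->
  forall p, Lt t p || Lt t.+1 p || Jt t p -> dotEt t w (fun a b => Jvec u p a b) = 0.
Let i0 : 'I_d := Ordinal (ltnW d_gt1).
Let i1 : 'I_d := Ordinal d_gt1.

Lemma w_perp_admissible g : admissible gamma t g ->
  forall p, Lt t p || Lt t.+1 p || Jt t p -> dotEt t w (fun a b => Jvec g p a b) = 0.
Proof.
move=> adm p p_lev; have [u [Uu u_g]] := admissible_inU (ltnW d_gt1) gamma_pos adm.
rewrite -(w_perp Uu p_lev); apply: eq_bigr => a _; apply: eq_bigr => b ab.
have a_lev := Et_src ab; have b_lev := Et_dst ab.
by rewrite /Jvec !u_g // /Jt; [case/orP: b_lev | case/orP: a_lev] => ->; rewrite ?orbT.
Qed.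

Lemma w_Kp a b : Et t a b -> Kp t.+1 b -> w a b = 0.
Proof.
move=> ab b1; pose g x : R := if x == b then 1 else 0.
have adm : admissible gamma t g.
  split=> [x | y y1]; first by rewrite /g; case: eqVneq => // ->; rewrite /Jt b1 !orbT.
  apply: big1 => x yx; rewrite /g; case: eqVneq => [xb | _]; last by rewrite mulr0.
  by have := adj_ssum (edge_adj yx); rewrite xb (Lt_ssum y1) (Kp_ssum b1); lia.
have := w_perp_admissible adm (p := b); rewrite /Jt b1 !orbT => /(_ isT).
rewrite (dotEt_col (q := b)) => [|? ? a'b' b'b]; last exact: Jvec_col (Kp_ssum b1) a'b' b'b.
have Da := Lt_inD (Et_Kp ab b1).
rewrite (bigD1 a) //= big1 => [|a' /andP [a'b /eqP []]]; last first.
  apply: inBD_nbr_unique (Kp_inBD b1) (Lt_inD (Et_Kp a'b b1)) Da _ _.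
    exact: edge_adj (Et_edge a'b).
  exact: edge_adj (Et_edge ab).
by rewrite /Jvec (negbTE (Et_neq ab)) /g !eqxx (negbTE (Et_neq ab)) subr0 mulr1 addr0.
Qed.

Lemma other_star_nbr a q : Lt t.+1 q -> exists a', Et t a' q /\ a != a'.
Proof.
move=> q1; have /andP [q0 _] := inD_coord i0 (Lt_inD q1).
have l01 : lower i0 q != lower i1 q.
  by apply/eqP => /(congr1 (fun x : node => x i0 : nat)); rewrite /= lower_at lower_off //; lia.
have [al0 | al0] := eqVneq a (lower i0 q).
  by exists (lower i1 q); split; [apply: Et_lower | rewrite al0].
by exists (lower i0 q); split; [apply: Et_lower | ].
Qed.

Lemma w_star_ratio q a a' : Lt t.+1 q -> Et t a q -> Et t a' q ->
  w a q * gamma q a' = w a' q * gamma q a.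
Proof.
move=> q1 aq a'q; have [<- // | aa'] := eqVneq a a'.
have [g [adm g_star]] := admissible_star gamma_pos (i0 := i0) (i1 := i1) isT q1 aq a'q aa'.
have := w_perp_admissible adm (p := q); rewrite q1 orbT => /(_ isT).
rewrite (dotEt_col (q := q)) => [|? ? ab bq]; last exact: Jvec_col (Lt_ssum q1) ab bq.
rewrite (eq_bigr (fun x => - (w x q * star_datum gamma q a a' x))) => [|x xq]; last first.
  rewrite /Jvec (negbTE (Et_neq xq)) eqxx (admissible_Lt1 adm q1) sub0r mulrN g_star //.
  by rewrite edge_sym; apply: Et_edge xq.
by rewrite sumrN sum_star_datum // => /eqP; rewrite oppr_eq0 subr_eq0 => /eqP.
Qed.

Lemma w_Km a b : Et t a b -> Km t a -> w a b = 0.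
Proof.
move=> ab a0; have b1 := Et_Km ab a0; have [a' [a'b aa']] := other_star_nbr a b1.
have [g [adm g_star]] := admissible_star gamma_pos (i0 := i0) (i1 := i1) isT b1 ab a'b aa'.
have := w_perp_admissible adm (p := a); rewrite /Jt a0 !orbT => /(_ isT).
rewrite (dotEt_row (p := a)) => [|? ? a''b'' ap]; last exact: Jvec_row (Km_ssum a0) a''b'' ap.
rewrite (bigD1 b) //= big1 => [|b' /andP [ab' /eqP []]]; last first.
  apply: inBD_nbr_unique (Km_inBD a0) (Lt_inD (Et_Km ab' a0)) (Lt_inD b1) _ _.
    by rewrite adj_sym; apply: edge_adj (Et_edge ab').
  by rewrite adj_sym; apply: edge_adj (Et_edge ab).
rewrite /Jvec eqxx (admissible_Lt1 adm b1) subr0 g_star; last by rewrite edge_sym (Et_edge ab).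
rewrite /star_datum eqxx addr0 => /eqP; rewrite mulf_eq0 => /orP [/eqP // |].
by rewrite gt_eqF // gamma_pos // edge_sym (Et_edge a'b).
Qed.

Lemma w_row_sum p q : Lt t p -> Lt t.+1 q -> Et t p q -> \sum_(b | Et t p b) w p b = 0.
Proof.
move=> p0 q1 pq; have [a' [a'q pa']] := other_star_nbr p q1.
have [g [adm g_star]] := admissible_star gamma_pos (i0 := i0) (i1 := i1) isT q1 pq a'q pa'.
have := w_perp_admissible adm (p := p); rewrite p0 => /(_ isT).
rewrite (dotEt_row (p := p)) => [|? ? ab ap]; last exact: Jvec_row (Lt_ssum p0) ab ap.
rewrite (eq_bigr (fun b => w p b * g p)) => [|b pb]; last first.
  rewrite /Jvec eqxx; case/orP: (Et_dst pb) => [b1 | b1].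
    by rewrite (admissible_Lt1 adm b1) subr0.
  by rewrite (w_Kp pb b1) !mul0r.
rewrite -mulr_suml g_star; last by rewrite edge_sym (Et_edge pq).
rewrite /star_datum eqxx => /eqP; rewrite mulf_eq0 => /orP [/eqP // |].
by rewrite gt_eqF // gamma_pos // edge_sym (Et_edge a'q).
Qed.

(* Induction on the [i0]-coordinate of [q]: the star pivot [lower i0 q] is in
   [K_t^-], or in [L_t] with its other upper neighbours of smaller [i0]-coordinate. *)
Lemma w_Lt1 k q : Lt t.+1 q -> (q i0 < k)%N -> forall a, Et t a q -> w a q = 0.
Proof.
elim: k q => [// | k IHk] q q1 qk a aq.
have /andP [q0 _] := inD_coord i0 (Lt_inD q1); set p := lower i0 q.
have pq : Et t p q := Et_lower i0 q1.
suff wp : w p q = 0.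
  have := w_star_ratio q1 aq pq; rewrite wp mul0r => /eqP; rewrite mulf_eq0 => /orP [/eqP // |].
  by rewrite gt_eqF // gamma_pos // edge_lower // (Lt_inD q1).
case/orP: (Et_src pq) => [p0 | pm]; last exact: w_Km pq pm.
have := w_row_sum p0 q1 pq; rewrite (bigD1 q) //= big1 ?addr0 // => b /andP [pb bq].
case/orP: (Et_dst pb) => [b1 | b1]; last exact: w_Kp pb b1.
have := adj_lower_level q0 (edge_adj (Et_edge pb)); rewrite (Lt_ssum b1) (Lt_ssum q1).
case=> // [bq' | [bi _]]; first by rewrite bq' eqxx in bq.
by apply: IHk b1 _ _ pb; lia.
Qed.

Lemma w_Et a b : Et t a b -> w a b = 0.
Proof.
move=> ab; case/orP: (Et_dst ab) => [b1 | b1]; last exact: w_Kp ab b1.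
exact: w_Lt1 (ltnSn _) _ ab.
Qed.

End Orthogonality.

Theorem theorem4p2 (R : realFieldType) (d n : nat) (hd : (2 <= d)%N) (hn : (1 <= n)%N)
  (gamma : node d n -> node d n -> R)
  (gamma_sym : forall p q, gamma p q = gamma q p)
  (gamma_pos : forall p q, edge p q -> 0 < gamma p q)
  (t : nat) (ht1 : (d - 1 <= t)%N) (ht2 : (t <= d * n - 1)%N)
  (w : node d n -> node d n -> R) :
  (forall u, inU gamma t u ->
     forall p, Lt t p || Lt t.+1 p || Jt t p ->
       dotEt t w (fun a b => Jvec u p a b) = 0) ->
  forall a b, Et t a b -> w a b = 0.
Proof.
move=> w_perp a b; exact: w_Et hd gamma_pos w_perp a b.
Qed.
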